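(* Fix $d,m\geq1$ and smooth vector fields $f^0,\dots,f^m$ on $\mathbb{R}^d$. Let $\pi_d$ be an exotic forest. Then \[ F^{\mathrm{exo}}(\pi_d)=\sum_{d_0} F^{\mathrm{dec}}(\pi_{d_0}), \] where the sum runs over the equivalence classes of decorations $d_0$ of the underlying graph $\pi$ with $d\leq d_0$. Extending $F^{\mathrm{exo}}$ to all decorated forests by this same formula, the following Möbius inversion formula holds for every decorated forest $\pi_d$: \[ F^{\mathrm{dec}}(\pi_d)=\sum_{d\leq d_0}\mu(\pi_d,\pi_{d_0})F^{\mathrm{exo}}(\pi_{d_0}), \] where $\mu(\pi_{d_1},\pi_{d_1})=1$ and, for $d_1<d_2$, $\mu(\pi_{d_1},\pi_{d_2})=-\sum_{d_1\leq d<d_2}\mu(\pi_{d_1},\pi_d)$.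
   Context: A forest $\pi=(V,E)$ is a finite set $V$ of nodes with directed edges $E\subset V\times V$ (an edge $(v,w)$ makes $v$ a predecessor of $w$) such that each node has at most one outgoing edge and each connected component has exactly one node without outgoing edge (its root). A decoration is a map $d:V\to\mathbb{N}=\{0,1,2,\dots\}$ with $|d^{-1}(n)|$ even for all $n>0$. For decorations $d_1,d_2$ of the same graph, $d_2\leq d_1$ ($d_2$ finer than $d_1$) if there is $\alpha:\mathbb{N}\to\mathbb{N}$ with $\alpha(n)=0$ iff $n=0$ and $d_1=\alpha\circ d_2$; $d_1,d_2$ are equivalent if $d_1\leq d_2$ and $d_2\leq d_1$; $d_1<d_2$ means $d_1\leq d_2$ and not equivalent. Decorated forests are equivalence classes of decorated graphs under node bijections preserving edges and sending the decoration to an equivalent one; exotic forests are those with $|d^{-1}(n)|\in\{0,2\}$ for all $n>0$. For a decorated forest $\pi_d$ with roots $R$ and predecessor sets $\Pi(v)$, acting on smooth $\phi$: $F^{\mathrm{dec}}(\pi_d)[\phi](x)=\sum_{i_w\in\{1..d\},w\in V}\ \sum \phi_{I_R}(x)\prod_{v\in V}f^{p_{d(v)},i_v}_{I_{\Pi(v)}}(x)$, the inner sum over $p_n\in\{1,\dots,m\}$ for $n\in d(V)\setminus\{0\}$, pairwise distinct, with $p_0=0$; $F^{\mathrm{exo}}$ is defined by the same formula without the distinctness restriction. Here $f^{p,i}_{j_1\dots j_k}=\partial^k f^{p,i}/\partial x_{j_1}\cdots\partial x_{j_k}$, $\phi_{I_S}$ is the partial derivative of $\phi$ in the indices $i_w$,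 $w\in S$, and $F(\mathbf{1})[\phi]=\phi$ for the empty forest. *)

From HB Require Import structures.
From mathcomp Require Import all_boot all_order all_algebra.
From mathcomp Require Import all_classical all_reals all_analysis.
Set Implicit Arguments. Unset Strict Implicit. Unset Printing Implicit Defensive.
Import Order.TTheory GRing.Theory Num.Theory.
Import numFieldNormedType.Exports.
Local Open Scope ring_scope.

(* [par v = Some w] encodes the (unique) outgoing edge (v,w): v is a
   predecessor of w.  [par v = None] means v is a root. *)
Definition forest_edge (n : nat) (par : 'I_n -> option 'I_n) : rel 'I_n :=
  fun v w => (par v == Some w) || (par w == Some v).

Definition is_forest (n : nat) (par : 'I_n -> option 'I_n) : Prop :=
  forall v : 'I_n, exists! r : 'I_n,
    connect (forest_edge par) v r /\ par r = None.

Definition roots (n : nat) (par : 'I_n -> option 'I_n) : seq 'I_n :=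
  [seq v <- enum 'I_n | par v == None].

Definition preds (n : nat) (par : 'I_n -> option 'I_n) (v : 'I_n) : seq 'I_n :=
  [seq w <- enum 'I_n | par w == Some v].

Definition is_decoration (n : nat) (dc : 'I_n -> nat) : Prop :=
  forall k : nat, (0 < k)%N -> ~~ odd #|[set v | dc v == k]|.

Definition is_exotic (n : nat) (dc : 'I_n -> nat) : Prop :=
  is_decoration dc /\
  forall k : nat, (0 < k)%N -> #|[set v | dc v == k]| = 0%N \/ #|[set v | dc v == k]| = 2%N.

(* dec_le d2 d1 : d2 <= d1 (d2 finer than d1) *)
Definition dec_le (n : nat) (d2 d1 : 'I_n -> nat) : Prop :=
  exists alpha : nat -> nat,
    (forall k, alpha k = 0%N <-> k = 0%N) /\ (forall v, d1 v = alpha (d2 v)).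

Definition dec_equiv (n : nat) (d1 d2 : 'I_n -> nat) : Prop :=
  dec_le d1 d2 /\ dec_le d2 d1.

Definition dec_lt (n : nat) (d1 d2 : 'I_n -> nat) : Prop :=
  dec_le d1 d2 /\ ~ dec_equiv d1 d2.

(* Representatives of equivalence classes of decorations: the canonical
   labelling where a node with nonzero label gets (1 + position of the first
   node carrying the same label), and zero stays zero. Every class contains
   exactly one canonical labelling, with values in 'I_n.+1. *)
Definition canon (n : nat) (dc : 'I_n -> nat) (v : 'I_n) : nat :=
  if dc v == 0%N then 0%N else (find (fun w => dc w == dc v) (enum 'I_n)).+1.

Definition dnat (n : nat) (c : {ffun 'I_n -> 'I_n.+1}) : 'I_n -> nat :=
  fun v => nat_of_ord (c v).

Definition canon_rep (n : nat) (c : {ffun 'I_n -> 'I_n.+1}) : bool :=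
  [forall v, dnat c v == canon (dnat c) v].

Definition ebasis (R : realType) (d : nat) (j : 'I_d) : 'rV[R]_d :=
  delta_mx 0 j.

Definition pdiff (R : realType) (d : nat) (g : 'rV[R]_d -> R) (js : seq 'I_d)
  : 'rV[R]_d -> R :=
  foldr (fun j h => 'D_(ebasis R j) h) g js.

Definition smooth (R : realType) (d : nat) (g : 'rV[R]_d -> R) : Prop :=
  forall (js : seq 'I_d) (x : 'rV[R]_d), differentiable (pdiff g js) x.

Definition vcomp (R : realType) (d m : nat)
  (f : 'I_m.+1 -> 'rV[R]_d -> 'rV[R]_d) (p : 'I_m.+1) (i : 'I_d) : 'rV[R]_d -> R :=
  fun x => f p x ord0 i.

(* An assignment q : V -> {0..m} encodes q v = p_{dc(v)} (with p_0 = 0).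
   For F^dec the p_k (k in dc(V)\{0}) are pairwise distinct in {1..m};
   for F^exo they are arbitrary in {1..m}. *)
Definition compat_dec (n m : nat) (dc : 'I_n -> nat) (q : {ffun 'I_n -> 'I_m.+1}) : bool :=
  [forall v, (q v == ord0) == (dc v == 0%N)] &&
  [forall v, forall w, (q v == q w) == (dc v == dc w)].

Definition compat_exo (n m : nat) (dc : 'I_n -> nat) (q : {ffun 'I_n -> 'I_m.+1}) : bool :=
  [forall v, (q v == ord0) == (dc v == 0%N)] &&
  [forall v, forall w, (dc v == dc w) ==> (q v == q w)].

Definition Fterm (R : realType) (d m n : nat) (par : 'I_n -> option 'I_n)
  (f : 'I_m.+1 -> 'rV[R]_d -> 'rV[R]_d) (phi : 'rV[R]_d -> R)
  (i : {ffun 'I_n -> 'I_d}) (q : {ffun 'I_n -> 'I_m.+1}) (x : 'rV[R]_d) : R :=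
  pdiff phi [seq i w | w <- roots par] x *
  \prod_(v : 'I_n) pdiff (vcomp f (q v) (i v)) [seq i w | w <- preds par v] x.

Definition Fdec (R : realType) (d m n : nat) (par : 'I_n -> option 'I_n)
  (dc : 'I_n -> nat) (f : 'I_m.+1 -> 'rV[R]_d -> 'rV[R]_d) (phi : 'rV[R]_d -> R)
  (x : 'rV[R]_d) : R :=
  \sum_(i : {ffun 'I_n -> 'I_d})
    \sum_(q : {ffun 'I_n -> 'I_m.+1} | compat_dec dc q) Fterm par f phi i q x.

Definition Fexo (R : realType) (d m n : nat) (par : 'I_n -> option 'I_n)
  (dc : 'I_n -> nat) (f : 'I_m.+1 -> 'rV[R]_d -> 'rV[R]_d) (phi : 'rV[R]_d -> R)
  (x : 'rV[R]_d) : R :=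
  \sum_(i : {ffun 'I_n -> 'I_d})
    \sum_(q : {ffun 'I_n -> 'I_m.+1} | compat_exo dc q) Fterm par f phi i q x.

Definition Fexo_ext (R : realType) (d m n : nat) (par : 'I_n -> option 'I_n)
  (dc : 'I_n -> nat) (f : 'I_m.+1 -> 'rV[R]_d -> 'rV[R]_d) (phi : 'rV[R]_d -> R)
  (x : 'rV[R]_d) : R :=
  \sum_(c : {ffun 'I_n -> 'I_n.+1} |
          canon_rep c && `[< is_decoration (dnat c) /\ dec_le dc (dnat c) >])
    Fdec par (dnat c) f phi x.

From Pilot Require Import Defs.
From HB Require Import structures.
From mathcomp Require Import all_boot all_order all_algebra.
From mathcomp Require Import all_classical all_reals all_analysis.
Import Order.TTheory GRing.Theory Num.Theory.
Import numFieldNormedType.Exports.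
Local Open Scope ring_scope.

Set Implicit Arguments. Unset Strict Implicit. Unset Printing Implicit Defensive.

Local Notation canon := Defs.canon.

(* Both identities are purely combinatorial.  An assignment q of vector fields to the nodes that is constant on the
   classes of a decoration d induces, by its own level sets, a decoration
   coarser than d, and it is an assignment with pairwise distinct fields for
   exactly that decoration.  Grouping the terms of F^exo(d) by the class of
   this induced decoration yields the sum of F^dec over the classes above d.
   The second identity is then Moebius inversion on the finite poset of
   decoration classes, realised by their canonical labellings: the recursion
   defining mu makes the sum of mu(d, c) over d <= c <= d0 vanish unless d0 is
   the class of d. *)

Section MobiusInversion.

Variables (R : pzRingType) (T : finType) (le : rel T) (a : T) (m : T -> R).
Hypotheses (le_trans : transitive le) (le_anti : antisymmetric le).
Hypotheses (le_aa : le a a) (le_refl_above : forall b, le a b -> le b b).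
Hypothesis m_a : m a = 1.
Hypothesis m_above :
  forall b, le a b -> b != a -> m b = - \sum_(c | le a c && le c b && (c != b)) m c.

Lemma mobius_sum_interval b : le a b -> \sum_(c | le a c && le c b) m c = (a == b)%:R.
Proof.
move=> ab; rewrite (bigD1 b) /=; last by rewrite ab le_refl_above.
have [<-|ba] := eqVneq a b.
  rewrite m_a big1 ?addr0 // => c /andP [/andP [ac ca] ca'].
  by rewrite (@le_anti a c) ?ac ?ca ?eqxx in ca'.
by rewrite m_above // 1?eq_sym // addNr.
Qed.

Lemma mobius_inversion (h : T -> R) :
  \sum_(c | le a c) m c * \sum_(b | le c b) h b = h a.
Proof.
under eq_bigr do rewrite big_distrr.
rewrite (exchange_big_dep (le a)) /=; last by move=> c b; apply: le_trans.
under eq_bigr do rewrite -big_distrl mobius_sum_interval //=.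
rewrite (bigD1 a) //= eqxx mul1r big1 ?addr0 // => b /andP [_ ba].
by rewrite eq_sym (negbTE ba) mul0r.
Qed.

End MobiusInversion.

Section Decorations.

Variable n : nat.
Implicit Types (a b e : 'I_n -> nat) (c : {ffun 'I_n -> 'I_n.+1}).

Definition finer a b : Prop :=
  (forall v, (a v == 0%N) = (b v == 0%N)) /\ (forall v w, a v = a w -> b v = b w).

Lemma finer_trans a b e : finer a b -> finer b e -> finer a e.
Proof.
move=> [ab0 ab] [be0 be]; split=> [v|v w vw]; first by rewrite ab0 be0.
exact/be/ab.
Qed.

Lemma finer_eqfun a b : a =1 b -> finer a b.
Proof. by move=> e; split=> [v|v w]; rewrite !e. Qed.

Lemma dec_le_finer a b : dec_le a b <-> finer a b.
Proof.
split=> [[al [al0 eb]]|[ab0 ab]].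
  split=> [v|v w e]; rewrite !eb ?e //.
  by apply/eqP/eqP => [/al0|/(proj1 (al0 _))].
exists (fun k => if [pick v | a v == k] is Some v then b v else k); split.
  move=> k; case: pickP => [v /eqP <-|_] //.
  by split=> /eqP; [rewrite -ab0 | rewrite ab0] => /eqP.
move=> v; case: pickP => [u /eqP|/(_ v)]; last by rewrite eqxx.
by move=> /esym/ab.
Qed.

Lemma decoration_finer a b : is_decoration a -> finer a b -> is_decoration b.
Proof.
move=> deca [ab0 ab] k k0; set D := [set v | b v == k].
rewrite (card_partition (preim_partitionP a D)) -dvdn2.
apply: dvdn_sum => A /imsetP [x]; rewrite inE => /eqP bx ->.
have -> : [set y in D | a x == a y] = [set y | a y == a x].
  apply/setP => y; rewrite !inE [a x == _]eq_sym.
  by case: (a y =P a x) => [/ab ->|]; rewrite ?bx ?eqxx ?andbF.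
by rewrite dvdn2 deca // lt0n ab0 bx -lt0n.
Qed.

Lemma canon_lt a v : (canon a v < n.+1)%N.
Proof.
rewrite /canon; case: eqP => // _; rewrite ltnS.
rewrite -[X in (_ <= X)%N](size_enum_ord n) -has_find.
by apply/hasP; exists v; rewrite ?mem_enum.
Qed.

Lemma canon_eq0 a v : (canon a v == 0%N) = (a v == 0%N).
Proof. by rewrite /canon; case: ifP. Qed.

Lemma canon_eqE a v w : (canon a v == canon a w) = (a v == a w).
Proof.
have has_class u : has (fun x => a x == a u) (enum 'I_n).
  by apply/hasP; exists u; rewrite ?mem_enum.
rewrite /canon; case: (a v =P 0%N) => [->|av0]; case: (a w =P 0%N) => [->|aw0] //.
- by rewrite eq_sym; apply/esym/eqP => /esym.
- by apply/esym/eqP.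
apply/eqP/eqP => [[e]|->] //.
by have := nth_find v (has_class v); rewrite e (eqP (nth_find v (has_class w))) => /eqP.
Qed.

Lemma finer_canon a : finer a (canon a) /\ finer (canon a) a.
Proof.
split; split=> [v|v w]; rewrite ?canon_eq0 //.
  by move=> e; apply/eqP; rewrite canon_eqE e.
by move/eqP; rewrite canon_eqE => /eqP.
Qed.

Lemma canon_finer_eq a b : finer a b -> finer b a -> canon a =1 canon b.
Proof.
move=> [ab0 ab] [_ ba] v; rewrite /canon ab0.
case: eqP => // _; congr S; apply: eq_find => w /=.
by apply/eqP/eqP => [/ab|/ba].
Qed.

Definition canonF a : {ffun 'I_n -> 'I_n.+1} := [ffun v => inord (canon a v)].

Lemma dnat_canonF a : dnat (canonF a) =1 canon a.
Proof. by move=> v; rewrite /dnat ffunE inordK // canon_lt. Qed.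

Lemma finer_canonF a : finer a (dnat (canonF a)) /\ finer (dnat (canonF a)) a.
Proof.
have [ac ca] := finer_canon a; have /finer_eqfun ec := dnat_canonF a.
have /finer_eqfun ce : canon a =1 dnat (canonF a) by move=> v; rewrite dnat_canonF.
by split; [apply: finer_trans ac ce | apply: finer_trans ec ca].
Qed.

Lemma canon_rep_canonF a : canon_rep (canonF a).
Proof.
apply/forallP => v; have [ac ca] := finer_canonF a.
by rewrite dnat_canonF (canon_finer_eq ac ca).
Qed.

Lemma canon_rep_inj (c c' : {ffun 'I_n -> 'I_n.+1}) :
  canon_rep c -> canon_rep c' -> finer (dnat c) (dnat c') -> finer (dnat c') (dnat c) ->
  c = c'.
Proof.
move=> /forallP rc /forallP rc' cc' c'c; apply/ffunP => v; apply/val_inj.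
by rewrite -[val _]/(dnat c v) -[val (c' v)]/(dnat c' v) (eqP (rc v)) (eqP (rc' v))
   (canon_finer_eq cc' c'c).
Qed.

Definition qnat m (q : {ffun 'I_n -> 'I_m.+1}) : 'I_n -> nat := fun v => q v.

Lemma compat_exoP m a (q : {ffun 'I_n -> 'I_m.+1}) :
  reflect (finer a (qnat q)) (compat_exo a q).
Proof.
apply: (iffP andP) => [[/forallP q0 /forallP aq]|[aq0 aq]].
  split=> [v|v w avw]; first by rewrite -(eqP (q0 v)).
  by apply/eqP; move/forallP/(_ w): (aq v); rewrite avw eqxx.
split; first by apply/forallP => v; rewrite aq0 -val_eqE.
apply/forallP => v; apply/forallP => w; apply/implyP => /eqP /aq avw.
by rewrite -val_eqE /= -[val _]/(qnat q v) avw.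
Qed.

Lemma compat_decP m a (q : {ffun 'I_n -> 'I_m.+1}) :
  reflect (finer a (qnat q) /\ finer (qnat q) a) (compat_dec a q).
Proof.
apply: (iffP andP) => [[/forallP q0 /forallP aq]|[[aq0 aq] [_ qa]]].
  have eq_aq v w : (a v == a w) = (qnat q v == qnat q w).
    by rewrite -(eqP (forallP (aq v) w)).
  have eq_aq0 v : (a v == 0%N) = (qnat q v == 0%N) by rewrite -(eqP (q0 v)).
  by split; split=> [v|v w /eqP]; rewrite ?eq_aq0 // (eq_aq, =^~ eq_aq) => /eqP.
split; first by apply/forallP => v; rewrite aq0 -val_eqE.
apply/forallP => v; apply/forallP => w; rewrite -val_eqE.
by apply/eqP; apply/eqP/eqP => [/qa|/aq].
Qed.

Definition coarser_class a (c : {ffun 'I_n -> 'I_n.+1}) : bool :=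
  canon_rep c && `[< is_decoration (dnat c) /\ dec_le a (dnat c) >].

Lemma coarser_classP a c :
  reflect [/\ canon_rep c, is_decoration (dnat c) & finer a (dnat c)] (coarser_class a c).
Proof.
apply: (iffP andP) => [[rc /asboolP [dc /dec_le_finer ac]]|[rc dc ac]] //.
by split=> //; apply/asboolP; split=> //; apply/dec_le_finer.
Qed.

Lemma coarser_class_canonF a b : is_decoration a -> finer a b -> coarser_class a (canonF b).
Proof.
move=> deca ab; have [bc _] := finer_canonF b; have ac := finer_trans ab bc.
by apply/coarser_classP; split; [apply: canon_rep_canonF | apply: decoration_finer ac |].
Qed.

Lemma coarser_class_finer a b : finer a b -> finer b a -> coarser_class a =1 coarser_class b.
Proof.
move=> ab ba c; apply/coarser_classP/coarser_classP => [[rc dc ac]|[rc dc bc]].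
  by split=> //; apply: finer_trans ba ac.
by split=> //; apply: finer_trans ab bc.
Qed.

Lemma compat_exo_class m a c (q : {ffun 'I_n -> 'I_m.+1}) : coarser_class a c ->
  (compat_exo a q && (canonF (qnat q) == c)) = compat_dec (dnat c) q.
Proof.
case/coarser_classP => rc _ ac; have [qc cq] := finer_canonF (qnat q).
apply/andP/compat_decP => [[_ /eqP <-] //|[cq' qc']].
split; first by apply/compat_exoP; apply: finer_trans ac cq'.
apply/eqP/canon_rep_inj; rewrite ?canon_rep_canonF //.
  exact: finer_trans cq qc'.
exact: finer_trans cq' qc.
Qed.

Definition class_le (c c' : {ffun 'I_n -> 'I_n.+1}) : bool := coarser_class (dnat c) c'.

Lemma class_le_trans : transitive class_le.
Proof.
move=> c b e /coarser_classP [_ _ bc] /coarser_classP [re de ce].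
by apply/coarser_classP; split=> //; apply: finer_trans bc ce.
Qed.

Lemma class_le_anti : antisymmetric class_le.
Proof.
move=> b c /andP [/coarser_classP [rc _ bc] /coarser_classP [rb _ cb]].
exact: canon_rep_inj.
Qed.

Lemma class_le_refl (b c : {ffun 'I_n -> 'I_n.+1}) : class_le b c -> class_le c c.
Proof. by case/coarser_classP => rc dc _; apply/coarser_classP; split. Qed.

Lemma coarser_class_le a : coarser_class a =1 class_le (canonF a).
Proof. by have [ac ca] := finer_canonF a; apply: coarser_class_finer. Qed.

Lemma strictly_coarser_class a (b c : {ffun 'I_n -> 'I_n.+1}) : canon_rep b ->
  (canon_rep c && `[< is_decoration (dnat c) /\ dec_le a (dnat c) /\ dec_lt (dnat c) (dnat b) >])
  = class_le (canonF a) c && class_le c b && (c != b).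
Proof.
move=> rb; rewrite -coarser_class_le.
apply/andP/andP => [[rc /asboolP [dc [/dec_le_finer ac [/dec_le_finer cb ncb]]]]|].
  split; first by apply/andP; split; apply/coarser_classP; split=> //; apply: decoration_finer cb.
  by apply: contra_notN ncb => /eqP ->; split; apply/dec_le_finer.
case=> /andP [/coarser_classP [rc dc ac] /coarser_classP [_ db cb]] ncb.
split=> //; apply/asboolP; split=> //; split; first exact/dec_le_finer.
split=> [|[_ /dec_le_finer bc]]; first exact/dec_le_finer.
by move/eqP: ncb; apply; apply: canon_rep_inj.
Qed.

End Decorations.

Section ElementaryDifferentials.

Variables (R : realType) (d m n : nat) (par : 'I_n -> option 'I_n).
Variables (f : 'I_m.+1 -> 'rV[R]_d -> 'rV[R]_d) (phi : 'rV[R]_d -> R) (x : 'rV[R]_d).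

Lemma Fdec_finer (a b : 'I_n -> nat) :
  finer a b -> finer b a -> Fdec par a f phi x = Fdec par b f phi x.
Proof.
move=> ab ba; apply: eq_bigr => i _; apply: eq_bigl => q.
apply/compat_decP/compat_decP => [[aq qa]|[bq qb]].
  by split; [apply: finer_trans ba aq | apply: finer_trans qa ab].
by split; [apply: finer_trans ab bq | apply: finer_trans qb ba].
Qed.

Lemma Fexo_sum_Fdec (dc : 'I_n -> nat) :
  is_decoration dc -> Fexo par dc f phi x = Fexo_ext par dc f phi x.
Proof.
move=> decdc; rewrite /Fexo_ext /Fexo /Fdec [in RHS]exchange_big /=.
apply: eq_bigr => i _.
rewrite (partition_big (fun q => canonF (qnat q)) (coarser_class dc)) /=; last first.
  by move=> q /compat_exoP dcq; apply: coarser_class_canonF.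
by apply: eq_bigr => c dcc; apply: eq_bigl => q; apply: compat_exo_class.
Qed.

Variable mu : ('I_n -> nat) -> ('I_n -> nat) -> R.
Hypothesis mu_equiv : forall d1 d2, is_decoration d1 -> is_decoration d2 ->
  dec_equiv d1 d2 -> mu d1 d2 = 1.
Hypothesis mu_lt : forall d1 d2, is_decoration d1 -> is_decoration d2 -> dec_lt d1 d2 ->
  mu d1 d2 = - \sum_(c : {ffun 'I_n -> 'I_n.+1} |
                     canon_rep c &&
                     `[< is_decoration (dnat c) /\ dec_le d1 (dnat c)
                         /\ dec_lt (dnat c) d2 >]) mu d1 (dnat c).

Lemma Fdec_mobius (dc : 'I_n -> nat) : is_decoration dc ->
  Fdec par dc f phi x =
  \sum_(c | coarser_class dc c) mu dc (dnat c) * Fexo_ext par (dnat c) f phi x.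
Proof.
move=> decdc; set a := canonF dc; have [dca adc] := finer_canonF dc.
have le_aa : class_le a a by rewrite -coarser_class_le coarser_class_canonF.
rewrite (eq_bigl _ _ (coarser_class_le dc)) (Fdec_finer dca adc).
have mu_a : mu dc (dnat a) = 1.
  apply: mu_equiv => //; first exact: decoration_finer dca.
  by split; apply/dec_le_finer.
have mu_above b : class_le a b -> b != a -> mu dc (dnat b) =
    - \sum_(c | class_le a c && class_le c b && (c != b)) mu dc (dnat c).
  move=> ab nba; case/coarser_classP: (ab) => rb db ab'.
  rewrite mu_lt //; last first.
    split; first by apply/dec_le_finer; apply: finer_trans dca ab'.
    case=> _ /dec_le_finer bdc; move/eqP: nba; apply.
    by apply: canon_rep_inj (canon_rep_canonF dc) _ _ => //; apply: finer_trans bdc dca.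
  by congr (- _); apply: eq_bigl => c; apply: strictly_coarser_class.
symmetry; exact: (mobius_inversion (@class_le_trans n) (@class_le_anti n) le_aa
  (@class_le_refl n a) mu_a mu_above (fun c => Fdec par (dnat c) f phi x)).
Qed.

End ElementaryDifferentials.

Theorem mainTheorem4 (R : realType) (d m : nat) (hd : (0 < d)%N) (hm : (0 < m)%N)
  (f : 'I_m.+1 -> 'rV[R]_d -> 'rV[R]_d)
  (hf : forall (p : 'I_m.+1) (i : 'I_d), smooth (vcomp f p i))
  (n : nat) (par : 'I_n -> option 'I_n) (hpar : is_forest par) :
  (forall dc : 'I_n -> nat, is_exotic dc ->
     forall (phi : 'rV[R]_d -> R), smooth phi -> forall x : 'rV[R]_d,
       Fexo par dc f phi x = Fexo_ext par dc f phi x)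
  /\
  (forall mu : ('I_n -> nat) -> ('I_n -> nat) -> R,
     (forall d1 d2, is_decoration d1 -> is_decoration d2 ->
        dec_equiv d1 d2 -> mu d1 d2 = 1) ->
     (forall d1 d2, is_decoration d1 -> is_decoration d2 -> dec_lt d1 d2 ->
        mu d1 d2 = - \sum_(c : {ffun 'I_n -> 'I_n.+1} |
                         canon_rep c &&
                         `[< is_decoration (dnat c) /\ dec_le d1 (dnat c)
                             /\ dec_lt (dnat c) d2 >]) mu d1 (dnat c)) ->
     forall dc : 'I_n -> nat, is_decoration dc ->
     forall (phi : 'rV[R]_d -> R), smooth phi -> forall x : 'rV[R]_d,
       Fdec par dc f phi x =
       \sum_(c : {ffun 'I_n -> 'I_n.+1} |
               canon_rep c && `[< is_decoration (dnat c) /\ dec_le dc (dnat c) >])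
         mu dc (dnat c) * Fexo_ext par (dnat c) f phi x).
Proof.
split=> [dc [decdc _] phi _ x|mu mu_equiv mu_lt dc decdc phi _ x].
  exact: Fexo_sum_Fdec.
exact: Fdec_mobius.
Qed.
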